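(* Let $U$ be the $\mathrm{mcG}(q)$ solution of $\dot u=f(u,t)$, $u(0)=u_0$, with residual $R_i(U,t)=\dot U_i(t)-f_i(U(t),t)$, and let $\tilde R$ be the local $L^2$-projection of $R$ onto the trial space, i.e. $\tilde R_i(U,\cdot)|_{I_{ij}}$ is the $L^2(I_{ij})$-orthogonal projection of $R_i(U,\cdot)|_{I_{ij}}$ onto the polynomials of degree $\le q_{ij}$ on $I_{ij}$, for $j=1,\dots,M_i$, $i=1,\dots,N$. Then every $\tilde R_i(U,\cdot)|_{I_{ij}}$ is a (possibly zero) scalar multiple of the Legendre polynomial of degree $q_{ij}$ on $I_{ij}$, i.e. of $t\mapsto P_{q_{ij}}\big(2(t-t_{i,j-1})/k_{ij}-1\big)$.
   Context: $f:\mathbb{R}^N\times(0,T]\to\mathbb{R}^N$ is bounded and Lipschitz in $u$. For each component $i$: partition $0=t_{i0}<\dots<t_{iM_i}=T$, $I_{ij}=(t_{i,j-1},t_{ij}]$, $k_{ij}=t_{ij}-t_{i,j-1}$, degrees $q_{ij}\ge1$. The $\mathrm{mcG}(q)$ solution $U$: each $U_i$ continuous on $[0,T]$, $U_i|_{I_{ij}}$ a polynomial of degree $\le q_{ij}$, $U(0)=u_0$, and $\int_{I_{ij}}\dot U_iv\,dt=\int_{I_{ij}}f_i(U,t)v\,dt$ for all polynomials $v$ of degree $\le q_{ij}-1$ on $I_{ij}$ (exact integration). $P_q$ is the degree-$q$ Legendre polynomial on $[-1,1]$. *)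

From HB Require Import structures.
From mathcomp Require Import all_boot all_order all_algebra.
From mathcomp Require Import all_classical all_reals all_analysis.
Set Implicit Arguments. Unset Strict Implicit. Unset Printing Implicit Defensive.
Import Order.TTheory GRing.Theory Num.Theory.
Import numFieldNormedType.Exports.
Local Open Scope classical_set_scope.
Local Open Scope ring_scope.

Definition legendre (R : fieldType) (n : nat) : {poly R} :=
  ((2 ^ n * n`!)%:R)^-1 *: ((('X ^+ 2 - 1) ^+ n)^`(n)).

Notation leb R := (@lebesgue_measure R).

Definition Iint (R : realType) (tp : nat -> R) (j : nat) : set R :=
  `]tp j.-1, tp j]%classic.

Definition valid_partitions (R : realType) (N : nat) (T : R)
  (M : 'I_N -> nat) (tp : 'I_N -> nat -> R) : Prop :=
  forall i, tp i 0%N = 0 /\ tp i (M i) = T /\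
            (forall j, (j < M i)%N -> tp i j < tp i j.+1).

Definition bounded_lipschitz (R : realType) (N : nat) (T : R)
  (f : ('I_N -> R) -> R -> 'I_N -> R) : Prop :=
  (exists C : R, forall u t i, 0 < t <= T -> `|f u t i| <= C) /\
  (exists L : R, forall u v t, 0 < t <= T ->
     forall i, `|f u t i - f v t i| <= L * \big[Num.max/0]_(k < N) `|u k - v k|).

Definition Udot (R : realType) (N : nat) (U : R -> 'I_N -> R) (i : 'I_N) : R -> R :=
  derive1 (fun s => U s i).

(* The mcG(q) solution U (U t i = U_i(t)). Exact integration; the integrals
   of f_i(U(t),t) v(t) are required to exist (integrability of f_i(U,.)). *)
Definition mcG_solution (R : realType) (N : nat) (T : R)
  (f : ('I_N -> R) -> R -> 'I_N -> R) (u0 : 'I_N -> R)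
  (M : 'I_N -> nat) (tp : 'I_N -> nat -> R) (q : 'I_N -> nat -> nat)
  (U : R -> 'I_N -> R) : Prop :=
  (forall i, {within `[0, T], continuous (fun t => U t i)}) /\
  (forall i j, (0 < j <= M i)%N ->
     exists p : {poly R}, (size p <= (q i j).+1)%N /\
       forall t, Iint (tp i) j t -> U t i = p.[t]) /\
  (forall i, U 0 i = u0 i) /\
  (forall i j, (0 < j <= M i)%N ->
     (leb R).-integrable (Iint (tp i) j) (fun t => (f (U t) t i)%:E)) /\
  (forall i j, (0 < j <= M i)%N -> forall v : {poly R}, (size v <= q i j)%N ->
     \int[leb R]_(t in Iint (tp i) j) (Udot U i t * v.[t])
     = \int[leb R]_(t in Iint (tp i) j) (f (U t) t i * v.[t])).

Definition residual (R : realType) (N : nat)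
  (f : ('I_N -> R) -> R -> 'I_N -> R) (U : R -> 'I_N -> R) (i : 'I_N) (t : R) : R :=
  Udot U i t - f (U t) t i.

Definition is_L2_proj (R : realType) (I : set R) (qq : nat) (g : R -> R)
  (r : {poly R}) : Prop :=
  (size r <= qq.+1)%N /\
  forall v : {poly R}, (size v <= qq.+1)%N ->
    \int[leb R]_(t in I) ((g t - r.[t]) * v.[t]) = 0.

From HB Require Import structures.
From mathcomp Require Import all_boot all_order all_algebra.
From mathcomp Require Import all_classical all_reals all_analysis.
From mathcomp Require Import measurable_realfun.
From mathcomp Require Import ring lra zify.
Set Implicit Arguments.
Unset Strict Implicit.
Unset Printing Implicit Defensive.
Import Order.TTheory GRing.Theory Num.Theory.
Import numFieldNormedType.Exports.
Local Open Scope classical_set_scope.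
Local Open Scope ring_scope.

(* Let G be the q-fold antiderivative of r vanishing to order q at a.  If r
   is orthogonal on [a, b] to all polynomials of degree < q, repeated
   integration by parts shows that G also vanishes to order q at b; as G has
   degree <= 2q, it is a multiple of (t - a)^q (t - b)^q, so r = G^(q) is a
   multiple of the Legendre polynomial on [a, b] by Rodrigues' formula.  The
   projected residual is orthogonal to degree < q because the Galerkin
   condition makes the residual itself orthogonal to those polynomials. *)

Section PolyOrthogonal.
Variable R : numFieldType.
Implicit Types (a b c : R) (p r v G : {poly R}).

Definition prim p : {poly R} := \poly_(i < (size p).+1) (p`_i.-1 / i%:R).

Lemma deriv_prim p : (prim p)^`() = p.
Proof.
apply/polyP => i; rewrite coef_deriv coef_poly /=.
case: ltnP => hi.
- by rewrite -[_ *+ i.+1]mulr_natr divfK // pnatr_eq0.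
- by rewrite mul0rn; apply/esym/nth_default; rewrite -ltnS.
Qed.

Lemma size_prim p : (size (prim p) <= (size p).+1)%N.
Proof. exact: size_poly. Qed.

(* The exact-integration form of "int_a^b r v = 0 for all v of degree < n". *)
Definition poly_orthogonal a b (n : nat) r : Prop :=
  forall v P : {poly R}, (size v <= n)%N -> P^`() = r * v -> P.[b] = P.[a].

Lemma iterated_antiderivative r a k : exists G,
  [/\ G^`(k) = r, forall m, (m < k)%N -> G^`(m).[a] = 0 & (size G <= size r + k)%N].
Proof.
elim: k => [|k [G [Gk Ga sG]]]; first by exists r; split => //; rewrite addn0.
exists (prim G - ((prim G).[a])%:P); split.
- by rewrite derivSn derivB derivC subr0 deriv_prim.
- case=> [_|m mk]; first by rewrite derivn0 hornerD hornerN hornerC subrr.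
  by rewrite derivSn derivB derivC subr0 deriv_prim Ga.
- apply: leq_trans (size_polyD _ _) _; rewrite geq_max size_polyN addnS.
  by rewrite (leq_trans (size_prim _)) // (leq_trans (size_polyC_leq1 _)).
Qed.

Lemma derivnSMXsubC p c m :
  (p * ('X - c%:P))^`(m.+1) = p^`(m.+1) * ('X - c%:P) + p^`(m) *+ m.+1.
Proof.
elim: m => [|m IH].
  by rewrite derivn1 derivM derivXsubC mulr1 derivn0 mulr1n derivn1.
rewrite derivnS IH derivD derivM derivXsubC mulr1 derivMn -!derivnS.
by rewrite [in RHS]mulrS addrA.
Qed.

Lemma XsubCn_dvdp c n G :
  (forall m, (m < n)%N -> G^`(m).[c] = 0) -> ('X - c%:P) ^+ n %| G.
Proof.
elim: n G => [|n IH] G HG; first by rewrite expr0 dvd1p.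
have /factor_theorem [Q GQ] : root G c by apply/eqP; rewrite -(derivn0 G) HG.
rewrite GQ exprSr dvdp_mul //; apply: IH => m mn.
have := HG m.+1 mn; rewrite GQ derivnSMXsubC hornerD hornerM hornerMn.
rewrite hornerD hornerN hornerX hornerC subrr mulr0 add0r => /eqP.
by rewrite mulrn_eq0 /= => /eqP.
Qed.

(* Integration by parts against an antiderivative of [v]. *)
Lemma poly_orthogonal_deriv a b k p :
  p.[a] = 0 -> poly_orthogonal a b k.+1 p^`() ->
  p.[b] = 0 /\ poly_orthogonal a b k p.
Proof.
move=> pa orth.
have pb : p.[b] = 0.
  by rewrite -pa; apply: (orth 1) => //; rewrite ?mulr1 // size_poly1.
split=> // v P sv dP.
have sw : (size (prim v) <= k.+1)%N.
  exact: leq_trans (size_prim v) (sv : (size v).+1 <= k.+1)%N.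
have := orth (prim v) (p * prim v - P) sw.
rewrite derivB derivM deriv_prim dP addrK => /(_ erefl).
by rewrite !hornerD !hornerN !hornerM pa pb !mul0r !sub0r => /oppr_inj.
Qed.

Lemma poly_orthogonal_derivn_root a b n G :
  poly_orthogonal a b n G^`(n) -> (forall m, (m < n)%N -> G^`(m).[a] = 0) ->
  forall m, (m < n)%N -> G^`(m).[b] = 0.
Proof.
move=> orth Ga.
have down d : (d <= n)%N -> poly_orthogonal a b (n - d) G^`(n - d).
  elim: d => [|d IH] dn; first by rewrite subn0.
  have e : (n - d = (n - d.+1).+1)%N by lia.
  have := IH (ltnW dn); rewrite e derivnS.
  by case/poly_orthogonal_deriv => //; apply: Ga; lia.
move=> m mn; have e : (m.+1 = n - (n - m.+1))%N by lia.
have := down (n - m.+1)%N (leq_subr _ _); rewrite -e derivnS.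
by case/poly_orthogonal_deriv => //; exact: Ga.
Qed.

Lemma derivn_roots_scale_XsubCn a b q G : a != b ->
  (forall m, (m < q)%N -> G^`(m).[a] = 0) ->
  (forall m, (m < q)%N -> G^`(m).[b] = 0) ->
  (size G <= q.*2.+1)%N ->
  exists c, G = c *: (('X - a%:P) ^+ q * ('X - b%:P) ^+ q).
Proof.
move=> ab Ga Gb sG; set W := _ * _.
have : W %| G.
  rewrite Gauss_dvdp ?XsubCn_dvdp //.
  apply: (coprimep_expl q); apply: (coprimep_expr q).
  by rewrite coprimep_XsubC root_XsubC eq_sym.
case/dvdpP => K GK.
have XsubC_neq0 c : 'X - c%:P != 0 by rewrite -size_poly_eq0 size_XsubC.
have sW : size W = q.*2.+1.
  by rewrite /W size_mul ?expf_neq0 // !size_exp_XsubC; lia.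
have sK : (size K <= 1)%N.
  have [->|K0] := eqVneq K 0; first by rewrite size_poly0.
  move: sG; rewrite GK size_mul ?mulf_neq0 ?expf_neq0 // sW.
  by case: (size K) => // n; lia.
by exists K`_0; rewrite GK {1}(size1_polyC sK) mul_polyC.
Qed.

Lemma legendre_affine_Rodrigues a b q : a != b -> exists2 lam : R, lam != 0 &
  forall t, (legendre R q).[2 * (t - a) / (b - a) - 1] =
            lam * ((('X - a%:P) ^+ q * ('X - b%:P) ^+ q)^`(q)).[t].
Proof.
move=> ab; have h0 : b - a != 0 by rewrite subr_eq0 eq_sym.
pose al := 2 / (b - a).
have al0 : al != 0 by rewrite /al mulf_neq0 ?invr_eq0 // pnatr_eq0.
have alh : al * (b - a) = 2 by rewrite /al divfK.
set A : {poly R} := al%:P * ('X - a%:P) - 1.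
have At t : A.[t] = 2 * (t - a) / (b - a) - 1 by rewrite /A !hornerE /al; ring.
clearbody al.
have dA : A^`() = al%:P.
  by rewrite /A derivB derivM derivC mul0r add0r derivXsubC mulr1 -polyC1 derivC subr0.
have derivn_comp n p : (p \Po A)^`(n) = al ^+ n *: (p^`(n) \Po A).
  elim: n => [|n IH]; first by rewrite !derivn0 expr0 scale1r.
  rewrite derivnS IH derivZ deriv_comp dA -derivnS mulrC mul_polyC scalerA.
  by rewrite -exprSr.
have A2 : A ^+ 2 - 1 = al ^+ 2 *: (('X - a%:P) * ('X - b%:P)).
  have Xb : 'X - b%:P = ('X - a%:P) - (b - a)%:P by rewrite polyCB; ring.
  apply/eqP; rewrite -subr_eq0 -mul_polyC polyC_exp Xb; apply/eqP.
  transitivity (al%:P * ('X - a%:P) * ((al * (b - a))%:P - 2)).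
    by rewrite [(al * _)%:P]polyCM /A; ring.
  by rewrite alh polyC_natr subrr mulr0.
set k := ((2 ^ q * q`!)%:R : R)^-1.
have k0 : k != 0.
  by rewrite /k invr_eq0 pnatr_eq0 -lt0n muln_gt0 expn_gt0 fact_gt0.
exists (k * (al ^+ q)^-1 * (al ^+ 2) ^+ q).
  by rewrite !mulf_neq0 ?invr_eq0 ?expf_neq0.
move=> t; rewrite -At -horner_comp /legendre comp_polyZ.
have -> : (('X ^+ 2 - 1) ^+ q)^`(q) \Po A =
          (al ^+ q)^-1 *: (('X ^+ 2 - 1) ^+ q \Po A)^`(q).
  by rewrite derivn_comp scalerA mulVf ?scale1r // expf_neq0.
rewrite rmorphXn /= comp_polyB rmorphXn /= comp_polyX -polyC1 comp_polyC polyC1 A2.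
by rewrite exprZn (exprMn q ('X - a%:P)) derivnZ !scalerA hornerZ.
Qed.

Lemma poly_orthogonal_legendre a b q r : a != b ->
  (size r <= q.+1)%N -> poly_orthogonal a b q r ->
  exists c, forall t, r.[t] = c * (legendre R q).[2 * (t - a) / (b - a) - 1].
Proof.
move=> ab sr orth.
have [G [Gq Ga sG]] := iterated_antiderivative r a q.
have Gb : forall m, (m < q)%N -> G^`(m).[b] = 0.
  by apply: poly_orthogonal_derivn_root Ga; rewrite Gq.
have sG2 : (size G <= q.*2.+1)%N by lia.
have [K GK] := derivn_roots_scale_XsubCn ab Ga Gb sG2.
have [lam lam0 Hlam] := legendre_affine_Rodrigues q ab.
by exists (K / lam) => t; rewrite Hlam -Gq GK derivnZ hornerZ mulrA divfK.
Qed.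

End PolyOrthogonal.

Section PolyIntegrals.
Context {R : realType}.
Variables a b : R.
Local Notation mu := (@lebesgue_measure R).

Lemma horner_within_continuous (P : {poly R}) (A : set R) :
  {within A, continuous (horner P)}.
Proof. by apply: continuous_subspaceT => x; exact: continuous_horner. Qed.

Lemma horner_measurable_fun (P : {poly R}) (A : set R) :
  measurable A -> measurable_fun A (horner P).
Proof.
move=> mA; apply: measurable_funTS.
exact: continuous_measurable_fun (@continuous_horner _ _).
Qed.

Lemma integrable_horner (P : {poly R}) (A : set R) :
  measurable A -> A `<=` `[a, b] -> mu.-integrable A (EFin \o horner P).
Proof.
move=> mA Aab; apply: (@integrableS _ _ _ mu `[a, b]) => //.
apply: continuous_compact_integrable; first exact: segment_compact.
exact: horner_within_continuous.
Qed.

Lemma bounded_horner (P : {poly R}) (A : set R) :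
  A `<=` `[a, b] -> [bounded P.[x] | x in A].
Proof.
move=> Aab.
have /compact_bounded[M [_ HM]] :=
  continuous_compact (@horner_within_continuous P `[a, b]) (@segment_compact _ a b).
exists M; split; rewrite ?num_real // => y My x Ax.
by apply: HM => //; exists x => //; exact: Aab.
Qed.

Lemma integrableM_horner (g : R -> R) (v : {poly R}) :
  mu.-integrable `]a, b] (EFin \o g) ->
  mu.-integrable `]a, b] (EFin \o (fun t => g t * v.[t])).
Proof.
move=> gint.
have vb : [bounded v.[x] | x in `]a, b]].
  by apply: bounded_horner; apply: subset_itvr; rewrite bnd_simp.
have mv : measurable_fun `]a, b] (horner v) := horner_measurable_fun v (measurable_itv _).
have mD : @measurable _ (measurableTypeR R) `]a, b] := measurable_itv _.
by have := integrableMl mD gint mv vb.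
Qed.

Lemma Rintegral_itvoc_itvoo (f h : R -> R) :
  (forall t, `]a, b[%classic t -> f t = h t) -> mu.-integrable `]a, b[ (EFin \o h) ->
  \int[mu]_(t in `]a, b]) f t = \int[mu]_(t in `]a, b[) h t.
Proof.
move=> fh hint; rewrite -Rintegral_itv_bndo_bndc; last first.
  have mO : @measurable _ (measurableTypeR R) `]a, b[ := measurable_itv _.
  by apply: eq_integrable mO _ _ _ hint => t tab; rewrite /= (fh _ (set_mem tab)).
by apply: eq_Rintegral => t tab; rewrite (fh _ (set_mem tab)).
Qed.

Lemma derive1_horner_itvoo (u : R -> R) (p : {poly R}) :
  (forall t, `]a, b]%classic t -> u t = p.[t]) ->
  forall t, `]a, b[%classic t -> derive1 u t = (p^`()).[t].
Proof.
move=> up t tab; rewrite derivE !derive1E; apply: near_eq_derive.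
have := near_in_itvoo tab; apply: filterS => s; rewrite inE => sab.
by apply: up; move: sab; apply: subset_itvl; rewrite bnd_simp.
Qed.

Lemma Rintegral_horner_deriv (P : {poly R}) : a < b ->
  \int[mu]_(x in `]a, b[) (P^`()).[x] = P.[b] - P.[a].
Proof.
move=> ab; rewrite /Rintegral -(@integral_itv_bndoo _ _ _ _ true false); last first.
  by apply/measurable_EFinP; exact: horner_measurable_fun.
rewrite (@continuous_FTC2 _ (horner P^`()) (horner P) _ _ ab) //.
- exact: horner_within_continuous.
- split.
  + by move=> x _; exact: derivable_horner.
  + by apply: cvg_at_right_filter; exact: continuous_horner.
  + by apply: cvg_at_left_filter; exact: continuous_horner.
- by move=> x _; rewrite -derivE.
Qed.

Lemma projected_residual_orthogonal (u g : R -> R) (p r v : {poly R}) :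
  (forall t, `]a, b]%classic t -> u t = p.[t]) ->
  mu.-integrable `]a, b] (EFin \o g) ->
  \int[mu]_(t in `]a, b]) (derive1 u t * v.[t]) =
    \int[mu]_(t in `]a, b]) (g t * v.[t]) ->
  \int[mu]_(t in `]a, b]) ((derive1 u t - g t - r.[t]) * v.[t]) = 0 ->
  \int[mu]_(t in `]a, b[) (r * v).[t] = 0.
Proof.
move=> up gint galerkin proj.
have du := derive1_horner_itvoo up.
have mO : @measurable _ (measurableTypeR R) `]a, b[ := measurable_itv _.
have mD : @measurable _ (measurableTypeR R) `]a, b] := measurable_itv _.
have OD : `]a, b[ `<=` `]a, b] by apply: subset_itvl; rewrite bnd_simp.
have Oab : `]a, b[ `<=` `[a, b].
  by apply: subset_trans OD _; apply: subset_itvr; rewrite bnd_simp.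
have gvint : mu.-integrable `]a, b[ (EFin \o (fun t => g t * v.[t])).
  exact: integrableS mD mO OD (integrableM_horner v gint).
have pint (P : {poly R}) : mu.-integrable `]a, b[ (EFin \o horner P).
  exact: integrable_horner mO Oab.
have pgint : mu.-integrable `]a, b[
    (EFin \o (fun t => (p^`() * v - r * v).[t] - g t * v.[t])).
  apply: eq_integrable mO _ _ _ (integrableB mO (pint _) gvint) => t _.
  by rewrite /= EFinB.
rewrite (@Rintegral_itvoc_itvoo _ (fun t => (p^`() * v).[t])) in galerkin; last 2 first.
- by move=> t tab; rewrite du // hornerM.
- exact: pint.
rewrite (@Rintegral_itvoc_itvoo _ (fun t => g t * v.[t])) // in galerkin.
rewrite (@Rintegral_itvoc_itvoo _ (fun t => (p^`() * v - r * v).[t] - g t * v.[t]))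
  // in proj; last first.
  by move=> t tab; rewrite du // hornerD hornerN !hornerM; ring.
rewrite RintegralB // in proj.
rewrite (eq_Rintegral mu (g := fun t => (p^`() * v).[t] - (r * v).[t])) in proj;
  last by move=> t _; rewrite hornerD hornerN.
rewrite RintegralB // in proj; lra.
Qed.

End PolyIntegrals.

Theorem lemma6p8 (R : realType) (N : nat) (T : R)
  (f : ('I_N -> R) -> R -> 'I_N -> R) (u0 : 'I_N -> R)
  (M : 'I_N -> nat) (tp : 'I_N -> nat -> R) (q : 'I_N -> nat -> nat)
  (U : R -> 'I_N -> R) :
  0 < T ->
  bounded_lipschitz T f ->
  valid_partitions T M tp ->
  (forall i j, (0 < j <= M i)%N -> (1 <= q i j)%N) ->
  mcG_solution T f u0 M tp q U ->
  forall (i : 'I_N) (j : nat), (0 < j <= M i)%N ->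
  forall r : {poly R},
    is_L2_proj (Iint (tp i) j) (q i j) (residual f U i) r ->
    exists c : R, forall t, Iint (tp i) j t ->
      r.[t] = c * (legendre R (q i j)).[2 * (t - tp i j.-1) / (tp i j - tp i j.-1) - 1].
Proof.
move=> _ _ partition _ [_ [piecewise_poly [_ [f_int galerkin]]]] i j ij r [sr proj].
have ab : tp i j.-1 < tp i j.
  have [_ [_ incr]] := partition i; case/andP: ij => j0 jM.
  by have := incr j.-1; rewrite prednK // => ->.
have [p [_ Up]] := piecewise_poly i j ij.
have [|c Hc] := poly_orthogonal_legendre (negbT (lt_eqF ab)) sr; last by exists c.
move=> v P sv dP; apply/eqP; rewrite -subr_eq0 -(Rintegral_horner_deriv P ab) dP.
apply/eqP; apply: projected_residual_orthogonal Up (f_int i j ij) _ _.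
- exact: galerkin.
- exact: proj (leqW sv).
Qed.
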